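(* For any collective choice problem satisfying the standing assumptions in the context, an equilibrium exists in the game with private signals. In the public information benchmark, in which every voter observes the entire signal profile $s$ before voting, an equilibrium exists and it is unique.
   Context: Let $n\ge3$ be odd, $\mathcal N=\{1,\dots,n\}$, $\tau=(n-1)/2$; voters vote for $p^*$ or $p_*$ and a policy wins iff it gets strictly more than $\tau$ votes. Finite payoff sets $\mathcal V^{p^*},\mathcal V^{p_*}\subset\mathbb R$, signal set $\mathcal S=\{s^0,\dots,s^K\}$, $\mathcal M=\{s^1,\dots,s^K\}$, state space $\Omega=(\mathcal V^{p^*}\times\mathcal V^{p_*})^n\times\mathcal S^n$ with probability $P$; $V_i^d=V_i^{p^*}-V_i^{p_*}$; $V_i^d(E)=E_P[V_i^d\mid E]$ if $P(E)>0$, $0$ otherwise. $s^k\in\mathcal M$ is good news if $V_i^d(S_i=s^k)>0$, bad news if $<0$; $G,B$ count voters with good/bad news. Standing assumptions: $V_i^d(\Omega)>0$; $P$ invariant under permutations of voters; if $s_i=s^0$ then $P(V=v,S=s)=P(V=v,S_{-i}=s_{-i})P(S_i=s^0)$; if $s_i\ne s^0$ then $V_i^d(S=s)>0$ iff $V_i^d(S_i=s_i)>0$; $V_i^d(E)\ne0$ for all $i$ and non-null $E$; $P(B\ge1)>0$ and $P(G\ge\tau)>0$. With private signals, voter $i$ observes only $s_i$ and a strategy is $\sigma_i:\mathcal S\to[0,1]$; with public information, a strategy is $\phi_i:\mathcal S^n\to[0,1]$. ''Equilibrium'' means Bayes–Nash equilibrium in weakly undominated strategies. *)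

From HB Require Import structures.
From mathcomp Require Import all_boot all_order all_algebra all_fingroup.
From mathcomp Require Import reals.
Set Implicit Arguments. Unset Strict Implicit. Unset Printing Implicit Defensive.
Import Order.TTheory GRing.Theory Num.Theory.
Local Open Scope ring_scope.

Section Model.
Variables (R : realType) (n K : nat) (A1 A2 : finType).
Variables (v1 : A1 -> R) (v2 : A2 -> R).

(* signals: 'I_K.+1 = {s^0,...,s^K}, with s^0 = ord0 *)
Definition signal := 'I_K.+1.
(* state space Omega = (V^{p*} x V^{p_*})^n x S^n ; the finite payoff sets
   V^{p*}, V^{p_*} subset R are the images of injective maps v1, v2 *)
Definition Omega := ({ffun 'I_n -> A1 * A2} * {ffun 'I_n -> signal})%type.

Variable P : {ffun Omega -> R}.

Definition is_prob := (forall w, 0 <= P w) /\ \sum_w P w = 1.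

Definition Pr (E : pred Omega) : R := \sum_(w | E w) P w.

Definition Econd (f : Omega -> R) (E : pred Omega) : R :=
  if 0 < Pr E then (\sum_(w | E w) P w * f w) / Pr E else 0.

Definition Vstar (i : 'I_n) (w : Omega) : R := v1 (w.1 i).1.
Definition Vlow (i : 'I_n) (w : Omega) : R := v2 (w.1 i).2.
Definition Vd (i : 'I_n) (w : Omega) : R := Vstar i w - Vlow i w.
Definition Sig (i : 'I_n) (w : Omega) : signal := w.2 i.

Definition ev_Si (i : 'I_n) (k : signal) : pred Omega := fun w => Sig i w == k.
Definition ev_S (s : {ffun 'I_n -> signal}) : pred Omega := fun w => w.2 == s.

Definition VdE (i : 'I_n) (E : pred Omega) : R := Econd (Vd i) E.

Definition good_news (i : 'I_n) (k : signal) : bool :=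
  (k != ord0) && (0 < VdE i (ev_Si i k)).
Definition bad_news (i : 'I_n) (k : signal) : bool :=
  (k != ord0) && (VdE i (ev_Si i k) < 0).

Definition Gcount (w : Omega) : nat := #|[set i | good_news i (Sig i w)]|.
Definition Bcount (w : Omega) : nat := #|[set i | bad_news i (Sig i w)]|.

Definition tau : nat := (n.-1)./2.

Definition A_prior_favors := forall i : 'I_n, 0 < VdE i predT.

Definition A_symmetric := forall (pi : {perm 'I_n}) (w : Omega),
  P ([ffun j => w.1 (pi j)], [ffun j => w.2 (pi j)]) = P w.

Definition A_uninformed := forall (i : 'I_n) (v : {ffun 'I_n -> A1 * A2})
  (s : {ffun 'I_n -> signal}), s i = ord0 ->
  P (v, s) = Pr (fun w => (w.1 == v) && [forall j, (j != i) ==> (w.2 j == s j)])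
             * Pr (ev_Si i ord0).

Definition A_own_signal_decisive := forall (i : 'I_n) (s : {ffun 'I_n -> signal}),
  s i != ord0 -> (0 < VdE i (ev_S s) <-> 0 < VdE i (ev_Si i (s i))).

Definition A_nonzero := forall (i : 'I_n) (E : pred Omega), 0 < Pr E -> VdE i E != 0.

Definition A_news := 0 < Pr (fun w => (1 <= Bcount w)%N) /\
                     0 < Pr (fun w => (tau <= Gcount w)%N).

(* probability that p* gets strictly more than tau votes when each voter j
   independently votes for p* with probability q j *)
Definition pwin (q : 'I_n -> R) : R :=
  \sum_(b : {ffun 'I_n -> bool} | (tau < #|[set j | b j]|)%N)
     \prod_(j < n) (if b j then q j else 1 - q j).

(* A generic information structure: voter j observes obs j w : T.
   A (behavioral) strategy of voter j is a map T -> R giving the probability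
   of voting for p*. *)
Section Game.
Variables (T : Type) (obs : 'I_n -> Omega -> T).

Definition strategy := T -> R.
Definition profile := 'I_n -> strategy.

Definition valid (s : strategy) := forall t, 0 <= s t <= 1.
Definition valid_profile (sg : profile) := forall j, valid (sg j).

Definition upd (sg : profile) (i : 'I_n) (s : strategy) : profile :=
  fun j => if j == i then s else sg j.

Definition EU (i : 'I_n) (sg : profile) : R :=
  \sum_w P w * (let p := pwin (fun j => sg j (obs j w)) in
                Vstar i w * p + Vlow i w * (1 - p)).

Definition BNE (sg : profile) :=
  valid_profile sg /\
  forall i (s : strategy), valid s -> EU i (upd sg i s) <= EU i sg.

Definition weakly_dominated (i : 'I_n) (s : strategy) :=
  exists s' : strategy, valid s' /\
    (forall sg, valid_profile sg -> EU i (upd sg i s) <= EU i (upd sg i s')) /\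
    (exists sg, valid_profile sg /\ EU i (upd sg i s) < EU i (upd sg i s')).

Definition equilibrium (sg : profile) :=
  BNE sg /\ forall i, ~ weakly_dominated i (sg i).
End Game.

Definition obs_private (j : 'I_n) (w : Omega) : signal := w.2 j.
Definition obs_public (j : 'I_n) (w : Omega) : {ffun 'I_n -> signal} := w.2.

End Model.

(* Voter i's expected payoff is affine in her own probability of voting for p^*,
   with slope E[V_i^d * pivotal_i], where pivotal_i >= 0 is the probability that
   exactly tau of the other voters vote for p^*.  With public information, voting
   for p^* exactly when V_i^d(S = s) > 0 is therefore weakly dominant; any other
   undominated strategy agrees with it on non-null s, because against the profile
   in which exactly tau other voters vote for p^* voter i is pivotal for sure.
   With private signals every message other than s^0 has a dominant vote, p^* on
   good news and p_* otherwise, since the own signal decides the sign of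
   V_i^d(S = s); voters without a signal vote for p^* with a common probability x.
   The gain of such a voter is a polynomial in x, so the intermediate value
   theorem gives an x at which she is indifferent or at a corner.  Her mixed vote
   is undominated: against the pivot profile voting for p^* is strictly better,
   since s^0 is uninformative and the prior favours p^*; and x < 1 only if voting
   for p_* is strictly better when all others play x = 1. *)

Set Warnings "-notation-overridden -ambiguous-paths -notation-incompatible-prefix".
From Pilot Require Import Defs.
From HB Require Import structures.
From mathcomp Require Import all_boot all_order all_algebra all_fingroup.
From mathcomp Require Import reals.
From mathcomp Require Import ring.
Set Implicit Arguments. Unset Strict Implicit. Unset Printing Implicit Defensive.
Import Order.TTheory GRing.Theory Num.Theory.
Local Open Scope ring_scope.

Lemma poly_unit_equilibrium (R : rcfType) (p : {poly R}) :
  exists2 x, 0 <= x <= 1 &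
    (forall y, 0 <= y <= 1 -> (y - x) * p.[x] <= 0) /\ (x < 1 -> p.[1] < 0).
Proof.
have [p1_ge0 | p1_lt0] := lerP 0 p.[1].
  exists 1; rewrite ?ler01 ?lexx ?ltxx //; split=> // y /andP[_ y1].
  by rewrite mulr_le0_ge0 // subr_le0.
have [p0_le0 | p0_gt0] := lerP p.[0] 0.
  exists 0; rewrite ?ler01 ?lexx //; split=> // y /andP[y0 _].
  by rewrite subr0 mulr_ge0_le0.
have [x x01 /rootP px0] : exists2 x, 0 <= x <= 1 & root (- p) x.
  by apply: poly_ivt; rewrite ?ler01 // !hornerN oppr_le0 oppr_ge0 !ltW.
exists x => //; split=> // y _.
by move/eqP: px0; rewrite hornerN oppr_eq0 => /eqP ->; rewrite mulr0.
Qed.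

Section Pivotal.
Variables (R : realType) (n : nat).
Local Notation ballot := {ffun 'I_n -> bool}.
Implicit Types (q : 'I_n -> R) (i : 'I_n) (b : ballot).

Lemma eq_pwin q q' : q =1 q' -> pwin q = pwin q'.
Proof. by move=> eq_q; apply: eq_bigr => b _; apply: eq_bigr => j _; rewrite eq_q. Qed.

Definition pr_others q i b : R :=
  \prod_(j < n | j != i) (if b j then q j else 1 - q j).

Lemma pwin_eta q i r : pwin [eta q with i |-> r] =
  \sum_(b : ballot | (tau n < #|[set j | b j]|)%N)
     (if b i then r else 1 - r) * pr_others q i b.
Proof.
apply: eq_bigr => b _; rewrite (bigD1 i) //= eqxx; congr (_ * _).
by apply: eq_bigr => j /negbTE /= ->.
Qed.

Definition pivotal q i : R := pwin [eta q with i |-> 1] - pwin [eta q with i |-> 0].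

Lemma eq_pivotal q q' i : q =1 q' -> pivotal q i = pivotal q' i.
Proof. by move=> eq_q; congr (_ - _); apply: eq_pwin => j /=; rewrite eq_q. Qed.

Lemma pwin_eta_pivotal q i r :
  pwin [eta q with i |-> r] = pwin [eta q with i |-> 0] + r * pivotal q i.
Proof.
rewrite /pivotal !pwin_eta mulrBr !mulr_sumr -sumrB -big_split /=.
by apply: eq_bigr => b _; case: (b i); ring.
Qed.

Definition flip_at i b : ballot :=
  [ffun j => if j == i then ~~ b j else b j].

Lemma flip_atK i : involutive (flip_at i).
Proof.
by move=> b; apply/ffunP => j; rewrite !ffunE; case: eqP => //; rewrite negbK.
Qed.

Lemma pivotalE q i : pivotal q i =
  \sum_(b : ballot | b i) ((tau n < #|[set j | b j]|)%N%:R
                  - (tau n < #|[set j | flip_at i b j]|)%N%:R) * pr_others q i b.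
Proof.
have flip_i b : flip_at i b i = ~~ b i by rewrite ffunE eqxx.
have others_flip b : pr_others q i (flip_at i b) = pr_others q i b.
  by apply: eq_bigr => j /negbTE ne_ji; rewrite ffunE ne_ji.
rewrite /pivotal !pwin_eta !(big_mkcond (fun b => tau n < _)%N) /=.
rewrite (bigID (fun b => b i)) [X in _ - X](bigID (fun b => b i)) /=.
rewrite [X in _ - (_ + X)](reindex_inj (inv_inj (flip_atK i))) /=.
rewrite [X in _ + X - _]big1 ?[X in _ - (X + _)]big1 ?addr0 ?add0r;
  try by move=> b; case: (b i) => //= _; case: ifP; rewrite ?subrr ?mul0r.
under [X in _ - X]eq_bigl do rewrite flip_i negbK.
rewrite -sumrB; apply: eq_bigr => b bi; rewrite flip_i bi others_flip /=.
by do 2 case: ifP => _; rewrite /=; ring.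
Qed.

Lemma pivotal_ge0 q i : (forall j, 0 <= q j <= 1) -> 0 <= pivotal q i.
Proof.
move=> q01; rewrite pivotalE; apply: sumr_ge0 => b bi; apply: mulr_ge0.
  have le_card : (#|[set j | flip_at i b j]| <= #|[set j | b j]|)%N.
    apply/subset_leq_card/subsetP => j; rewrite !inE ffunE.
    by case: eqP => [->|_]; rewrite ?bi.
  rewrite subr_ge0 ler_nat.
  by case: (ltnP (tau n) #|[set j | flip_at i b j]|) => // /leq_trans ->.
apply: prodr_ge0 => j _; have /andP[q0 q1] := q01 j.
by case: (b j); rewrite ?subr_ge0.
Qed.

Lemma pwin_indicator (S : {set 'I_n}) :
  pwin (fun j => (j \in S)%:R) = (tau n < #|S|)%N%:R :> R.
Proof.
pose c : ballot := [ffun j => j \in S].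
have prod_indicator b :
    \prod_(j < n) (if b j then (j \in S)%:R else 1 - (j \in S)%:R) = (b == c)%:R :> R.
  have [-> | ne_bc] := eqVneq b c.
    by apply: big1 => j _; rewrite ffunE; case: (j \in S); rewrite ?subr0.
  have /existsP[j ne_j] : [exists j, b j != c j].
    by apply: contraNT ne_bc => /existsPn eq_bc; apply/eqP/ffunP => j; apply/eqP/negPn.
  apply/eqP/prodf_eq0; exists j => //.
  by move: ne_j; rewrite ffunE; case: (b j); case: (j \in S); rewrite //= subrr.
rewrite /pwin; under eq_bigr do rewrite prod_indicator.
rewrite big_mkcond (bigD1 c) //= big1 ?addr0 => [|b /negbTE ->]; last by case: ifP.
have -> : [set j | c j] = S by apply/setP => j; rewrite inE ffunE.
by rewrite eqxx; case: ifP.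
Qed.

Lemma pivotal_indicator (S : {set 'I_n}) i : i \notin S -> #|S| = tau n ->
  pivotal (fun j => (j \in S)%:R) i = 1.
Proof.
move=> iNS cardS; rewrite /pivotal.
rewrite (@eq_pwin _ (fun j => (j \in i |: S)%:R)) => [|j]; last first.
  by rewrite /= !inE; case: (j =P i).
rewrite [X in _ - X](@eq_pwin _ (fun j => (j \in S)%:R)) => [|j]; last first.
  by rewrite /=; case: (j =P i) => [->|]; rewrite ?(negbTE iNS).
by rewrite !pwin_indicator cardsU1 iNS cardS ltnSn ltnn subr0.
Qed.

Lemma tau_le_pred : (tau n <= n.-1)%N.
Proof. by rewrite leq_half_double -addnn leqW // leq_addr. Qed.

Lemma exists_pivot_set i : exists2 S : {set 'I_n}, i \notin S & #|S| = tau n.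
Proof.
have : (0 < #|[set S : {set 'I_n} | S \subset [set~ i] & #|S| == tau n]|)%N.
  by rewrite cards_draws bin_gt0 cardsC1 card_ord tau_le_pred.
case/card_gt0P => S; rewrite inE => /andP[/subsetP sub_S /eqP cardS].
by exists S => //; apply/negP => /sub_S; rewrite !inE eqxx.
Qed.

Lemma pwin_perm (pi : {perm 'I_n}) q : pwin (q \o pi) = pwin q.
Proof.
pose relabel (b : ballot) : ballot := [ffun j => b ((pi^-1)%g j)].
have relabel_inj : injective relabel.
  by move=> b1 b2 /ffunP eq_b; apply/ffunP => j; have := eq_b (pi j); rewrite !ffunE permK.
rewrite /pwin [RHS](reindex_inj relabel_inj) /=; apply: eq_big => b.
  have -> : [set j | relabel b j] = (pi^-1)%g @^-1: [set j | b j].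
    by apply/setP => j; rewrite !inE ffunE.
  by rewrite card_preimset //; apply: perm_inj.
move=> _; rewrite [RHS](reindex_inj (@perm_inj _ pi)); apply: eq_bigr => j _.
by rewrite ffunE permK.
Qed.

Lemma pivotal_perm (pi : {perm 'I_n}) q i : pivotal (q \o pi) i = pivotal q (pi i).
Proof.
rewrite /pivotal -(pwin_perm pi [eta q with pi i |-> 1]).
rewrite -(pwin_perm pi [eta q with pi i |-> 0]).
by congr (_ - _); apply: eq_pwin => j /=; rewrite (inj_eq (@perm_inj _ pi)).
Qed.

Definition pwin_poly (p : 'I_n -> {poly R}) : {poly R} :=
  \sum_(b : ballot | (tau n < #|[set j | b j]|)%N)
     \prod_(j < n) (if b j then p j else 1 - p j).

Lemma horner_pwin_poly p x : (pwin_poly p).[x] = pwin (fun j => (p j).[x]).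
Proof.
rewrite horner_sum; apply: eq_bigr => b _; rewrite horner_prod.
by apply: eq_bigr => j _; case: (b j); rewrite ?hornerE.
Qed.

Definition pivotal_poly (p : 'I_n -> {poly R}) i : {poly R} :=
  pwin_poly [eta p with i |-> 1] - pwin_poly [eta p with i |-> 0].

Lemma horner_pivotal_poly p i x :
  (pivotal_poly p i).[x] = pivotal (fun j => (p j).[x]) i.
Proof.
rewrite hornerD hornerN !horner_pwin_poly.
by congr (_ - _); apply: eq_pwin => j /=; case: eqP; rewrite ?hornerC.
Qed.

End Pivotal.

Section Model.
Variables (R : realType) (n K : nat) (A1 A2 : finType).
Variables (v1 : A1 -> R) (v2 : A2 -> R) (P : {ffun Omega n K A1 A2 -> R}).
Hypothesis P_ge0 : forall w, 0 <= P w.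

Local Notation state := (Omega n K A1 A2).
Local Notation sprofile := {ffun 'I_n -> signal K}.
Local Notation Vd := (Vd v1 v2).
Local Notation VdE := (VdE v1 v2 P).
Local Notation good_news := (good_news v1 v2 P).
Local Notation EU := (EU v1 v2 P).
Implicit Types (i : 'I_n) (E : pred state) (w : state) (s : sprofile).

Definition Vd_sum i E : R := \sum_(w | E w) P w * Vd i w.

Lemma Pr_ge0 E : 0 <= Pr P E.
Proof. exact: sumr_ge0. Qed.

Lemma sum_Pr_eq0 E (f : state -> R) : Pr P E = 0 -> \sum_(w | E w) P w * f w = 0.
Proof.
move=> PE0; apply: big1 => w Ew.
by rewrite (psumr_eq0P (fun w _ => P_ge0 w) PE0) ?mul0r.
Qed.

Lemma VdE_sign i E :
  (0 < VdE i E) = (0 < Vd_sum i E) /\ (VdE i E < 0) = (Vd_sum i E < 0).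
Proof.
rewrite /VdE /Defs.VdE /Econd; case: ifP => [PE_gt0 | /negbT].
  by rewrite pmulr_lgt0 ?pmulr_llt0 ?invr_gt0.
rewrite -leNgt => PE_le0.
have PE0 : Pr P E = 0 by apply/eqP; rewrite eq_le PE_le0 Pr_ge0.
by rewrite /Vd_sum sum_Pr_eq0 ?ltxx.
Qed.

Section Game.
Variables (T : finType) (obs : 'I_n -> state -> T).
Implicit Types (sg : profile R n T) (f : strategy R T) (t : T).

Definition gain sg i t : R :=
  \sum_(w | obs i w == t) P w * (Vd i w * pivotal (fun j => sg j (obs j w)) i).

Lemma EU_upd_sub sg i f1 f2 :
  EU obs i (upd sg i f1) - EU obs i (upd sg i f2) = \sum_t (f1 t - f2 t) * gain sg i t.
Proof.
have upd_eta f w : (fun j => upd sg i f j (obs j w)) =1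
    [eta fun j => sg j (obs j w) with i |-> f (obs i w)].
  by move=> j; rewrite /upd /=; case: eqP => // ->.
rewrite -sumrB (partition_big (obs i) predT) //=; apply: eq_bigr => t _.
rewrite mulr_sumr; apply: eq_bigr => w /eqP <-.
rewrite (eq_pwin (upd_eta f1 w)) (eq_pwin (upd_eta f2 w)).
by rewrite !(pwin_eta_pivotal _ _ (_ (obs i w))) /Defs.Vd; ring.
Qed.

Lemma EU_upd_id sg i : EU obs i (upd sg i (sg i)) = EU obs i sg.
Proof.
apply: eq_bigr => w _; rewrite (@eq_pwin _ _ _ (fun j => sg j (obs j w))) //.
by move=> j; rewrite /upd; case: eqP => // ->.
Qed.

Lemma EU_upd_le sg i f1 f2 : (forall t, (f1 t - f2 t) * gain sg i t <= 0) ->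
  EU obs i (upd sg i f1) <= EU obs i (upd sg i f2).
Proof. by move=> le0; rewrite -subr_le0 EU_upd_sub; apply: sumr_le0 => t _. Qed.

Lemma EU_upd_sub_le sg i f1 f2 t0 :
    (forall t, t != t0 -> (f1 t - f2 t) * gain sg i t <= 0) ->
  EU obs i (upd sg i f1) - EU obs i (upd sg i f2) <= (f1 t0 - f2 t0) * gain sg i t0.
Proof.
move=> le0; rewrite EU_upd_sub (bigD1 t0) //= gerDl.
by apply: sumr_le0 => t; apply: le0.
Qed.

Lemma equilibrium_of_dominant sg : valid_profile sg ->
    (forall i sg' f, valid_profile sg' -> valid f ->
       EU obs i (upd sg' i f) <= EU obs i (upd sg' i (sg i))) ->
  equilibrium v1 v2 P obs sg.
Proof.
move=> sg_valid dominant; split; first split => // i f f_valid.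
  by rewrite -[X in _ <= X]EU_upd_id; apply: dominant.
move=> i [f [f_valid [_ [sg' [sg'_valid lt_f]]]]].
by move: (dominant i sg' f sg'_valid f_valid); rewrite leNgt lt_f.
Qed.

Definition pivot_profile (S : {set 'I_n}) : profile R n T := fun j _ => (j \in S)%:R.

Lemma gain_pivot_profile i : exists2 sg, valid_profile sg &
  forall t, gain sg i t = Vd_sum i (fun w => obs i w == t).
Proof.
have [S iNS cardS] := exists_pivot_set i.
exists (pivot_profile S) => [j t | t].
  by rewrite /pivot_profile; case: (j \in S); rewrite /= ?lexx ?ler01.
by apply: eq_bigr => w _; rewrite pivotal_indicator ?mulr1.
Qed.

Lemma gain_poly (sgp : 'I_n -> T -> {poly R}) i t :
  exists p : {poly R}, forall x, gain (fun j u => (sgp j u).[x]) i t = p.[x].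
Proof.
exists (\sum_(w | obs i w == t)
          (P w * Vd i w)%:P * pivotal_poly (fun j => sgp j (obs j w)) i) => x.
rewrite horner_sum; apply: eq_bigr => w _.
by rewrite hornerM hornerC horner_pivotal_poly mulrA.
Qed.

End Game.

Lemma sum_by_signals i (Q : pred sprofile) (F : sprofile -> R) :
  \sum_(w | Q w.2) P w * (Vd i w * F w.2) = \sum_(s | Q s) F s * Vd_sum i (ev_S s).
Proof.
rewrite (partition_big snd Q) //=; apply: eq_bigr => s Qs.
rewrite /Vd_sum mulr_sumr; apply: eq_big => w.
  by rewrite /ev_S; case: eqP => [->|]; rewrite ?Qs ?andbF.
by move=> /andP[_ /eqP ->]; ring.
Qed.

Lemma gain_private sg i k : gain (@obs_private n K A1 A2) sg i k =
  \sum_(s : sprofile | s i == k) pivotal (fun j => sg j (s j)) i * Vd_sum i (ev_S s).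
Proof. exact: (sum_by_signals i (fun s => s i == k) (fun s => pivotal _ i)). Qed.

Lemma gain_public sg i s : gain (@obs_public n K A1 A2) sg i s =
  pivotal (fun j => sg j s) i * Vd_sum i (ev_S s).
Proof.
rewrite /gain (sum_by_signals i (pred1 s) (fun s => pivotal (fun j => sg j s) i)).
by rewrite big_pred1_eq.
Qed.

Hypothesis own_decisive : A_own_signal_decisive v1 v2 P.

Lemma Vd_sum_profile_gt0 i s :
  s i != ord0 -> (0 < Vd_sum i (ev_S s)) = good_news i (s i).
Proof.
move=> si0; rewrite /Defs.good_news si0 -!(VdE_sign _ _).1.
by apply/idP/idP => /(own_decisive si0).
Qed.

Lemma gain_private_news sg i k (f : strategy R (signal K)) :
    valid_profile sg -> valid f -> k != ord0 ->
  (f k - (good_news i k)%:R) * gain (@obs_private n K A1 A2) sg i k <= 0.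
Proof.
move=> sg_valid f_valid k0; have /andP[f_ge0 f_le1] := f_valid k.
have pivotal_ge0 s : 0 <= pivotal (fun j => sg j (s j)) i.
  by apply: pivotal_ge0 => j; apply: sg_valid.
rewrite gain_private; case good: (good_news i k).
  rewrite mulr_le0_ge0 ?subr_le0 //; apply: sumr_ge0 => s /eqP sik.
  by rewrite mulr_ge0 // ltW // Vd_sum_profile_gt0 sik.
rewrite mulr_ge0_le0 ?subr0 //; apply: sumr_le0 => s /eqP sik.
by rewrite mulr_ge0_le0 // leNgt Vd_sum_profile_gt0 sik ?good.
Qed.

Definition perm_state (pi : {perm 'I_n}) w : state :=
  ([ffun j => w.1 (pi j)], [ffun j => w.2 (pi j)]).

Lemma perm_state_inj pi : injective (perm_state pi).
Proof.
move=> [v s] [v' s'] [/ffunP eq_v /ffunP eq_s]; congr pair; apply/ffunP => j.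
  by have := eq_v ((pi^-1)%g j); rewrite !ffunE permKV.
by have := eq_s ((pi^-1)%g j); rewrite !ffunE permKV.
Qed.

Lemma Vd_perm_state pi i w : Vd i (perm_state pi w) = Vd (pi i) w.
Proof. by rewrite /Defs.Vd /Vstar /Vlow !ffunE. Qed.

Lemma sum_perm_state pi E (F : state -> R) :
  \sum_(w | E w) F w = \sum_(w | E (perm_state pi w)) F (perm_state pi w).
Proof. exact: (reindex_inj (@perm_state_inj pi)). Qed.

Hypothesis P_sym : A_symmetric P.

Lemma good_news_sym i j k : good_news i k = good_news j k.
Proof.
pose pi := tperm i j.
have ev_perm w : ev_Si i k (perm_state pi w) = ev_Si j k w.
  by rewrite /ev_Si /Sig ffunE tpermL.
have Pr_perm : Pr P (ev_Si i k) = Pr P (ev_Si j k).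
  by rewrite /Pr (sum_perm_state pi); apply: eq_big => w; rewrite ?ev_perm ?P_sym.
have Vd_sum_perm : Vd_sum i (ev_Si i k) = Vd_sum j (ev_Si j k).
  rewrite /Vd_sum (sum_perm_state pi); apply: eq_big => w; first exact: ev_perm.
  by rewrite P_sym Vd_perm_state tpermL.
by rewrite /Defs.good_news /Defs.VdE /Econd Pr_perm -/(Vd_sum i _) Vd_sum_perm.
Qed.

Lemma gain_private_sym (g : strategy R (signal K)) i j k :
  gain (@obs_private n K A1 A2) (fun _ => g) i k =
  gain (@obs_private n K A1 A2) (fun _ => g) j k.
Proof.
pose pi := tperm i j; rewrite /gain (sum_perm_state pi).
apply: eq_big => w; first by rewrite /obs_private ffunE tpermL.
move=> _; rewrite P_sym Vd_perm_state tpermL /obs_private.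
rewrite -[in pivotal _ j](tpermL i j) -(pivotal_perm pi (fun l => g (w.2 l))).
by congr (_ * (_ * _)); apply: eq_pivotal => l; rewrite /= ffunE.
Qed.

Hypothesis P_uninformed : A_uninformed P.

Lemma Vd_sum_uninformed i :
  Vd_sum i (ev_Si i ord0) = Pr P (ev_Si i ord0) * Vd_sum i predT.
Proof.
(* for [s i = s^0], [A_uninformed] factors [P (v, s)] as the mass of the fibre of
   [(v, s)] under [forget] times [Pr (S_i = s^0)] *)
pose forget w : state := (w.1, [ffun j => if j == i then ord0 else w.2 j]).
have fibre v s : s i = ord0 -> forall w,
    (w.1 == v) && [forall j, (j != i) ==> (w.2 j == s j)] = (forget w == (v, s)).
  move=> si0 w; rewrite /forget xpair_eqE; congr (_ && _).
  apply/forallP/eqP => [eq_off | <- j]; last first.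
    by rewrite ffunE; case: (j =P i) => [->|]; rewrite ?eqxx.
  apply/ffunP => j; rewrite ffunE; case: eqP => [-> | /eqP ne_ji]; first by rewrite si0.
  by have /implyP/(_ ne_ji)/eqP := eq_off j.
rewrite /Vd_sum [X in _ * X](partition_big forget (fun u => u.2 i == ord0)) /=; last first.
  by move=> w _; rewrite ffunE eqxx.
rewrite mulr_sumr; apply: eq_bigr => -[v s] /eqP si0.
rewrite (P_uninformed v si0) /Pr (eq_bigl _ _ (fibre v s si0)).
rewrite mulrAC mulrC [_ * Vd _ _]mulr_suml; congr (_ * _).
by apply: eq_bigr => w /eqP <-.
Qed.

Hypothesis prior : A_prior_favors v1 v2 P.

Lemma Vd_sum_prior_gt0 i : 0 < Vd_sum i predT.
Proof. by rewrite -(VdE_sign _ _).1. Qed.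

Section PrivateSignals.
Variable i0 : 'I_n.
Local Notation obs := (@obs_private n K A1 A2).

(* [news_vote x]: p^* on good news, p_* on any other message, and p^* with
   probability x on s^0; it is written as a polynomial in x for the intermediate
   value argument.  Good news does not depend on the voter, so [i0] is arbitrary. *)
Definition news_poly (k : signal K) : {poly R} :=
  if k == ord0 then 'X else (good_news i0 k)%:R%:P.

Definition news_vote (x : R) : strategy R (signal K) := fun k => (news_poly k).[x].

Lemma news_vote_valid x : 0 <= x <= 1 -> valid (news_vote x).
Proof.
move=> x01 k; rewrite /news_vote /news_poly; case: eqP => _; rewrite ?hornerX //.
by rewrite hornerC; case: good_news; rewrite /= ?lexx ?ler01.
Qed.

Lemma news_vote_deviation i sg f x : valid_profile sg -> valid f ->
  EU obs i (upd sg i f) - EU obs i (upd sg i (news_vote x)) <=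
  (f ord0 - x) * gain obs sg i ord0.
Proof.
move=> sg_valid f_valid.
have news0 : news_vote x ord0 = x by rewrite /news_vote /news_poly eqxx hornerX.
rewrite -[X in (_ - X) * _]news0; apply: EU_upd_sub_le => k k0.
rewrite /news_vote /news_poly (negbTE k0) hornerC (good_news_sym i0 i).
exact: gain_private_news.
Qed.

Lemma news_vote_undominated i x : 0 <= x <= 1 ->
    (x < 1 -> gain obs (fun _ => news_vote 1) i0 ord0 < 0) ->
  ~ weakly_dominated v1 v2 P obs i (news_vote x).
Proof.
move=> /andP[x_ge0 x_le1] corner [f [f_valid [dominates [sg1 [sg1_valid lt_f]]]]].
have /andP[f0_ge0 f0_le1] := f_valid ord0.
have dev_ge0 sg : valid_profile sg -> 0 <= (f ord0 - x) * gain obs sg i ord0.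
  move=> sg_valid; apply: le_trans _ (news_vote_deviation i x sg_valid f_valid).
  by rewrite subr_ge0 dominates.
have dev1_gt0 : 0 < (f ord0 - x) * gain obs sg1 i ord0.
  by apply: lt_le_trans _ (news_vote_deviation i x sg1_valid f_valid); rewrite subr_gt0.
have [f0_lt | f0_gt | f0_eq] := ltgtP (f ord0) x; last first.
- by move: dev1_gt0; rewrite f0_eq subrr mul0r ltxx.
- have sym_valid : valid_profile (fun _ : 'I_n => news_vote 1).
    by move=> _; apply: news_vote_valid; rewrite ler01 lexx.
  have := dev_ge0 _ sym_valid; rewrite (gain_private_sym _ i i0).
  by rewrite leNgt pmulr_rlt0 ?subr_gt0 ?corner // (lt_le_trans f0_gt).
- have Pr0_gt0 : 0 < Pr P (ev_Si i ord0).
    rewrite lt_def Pr_ge0 andbT; apply: contraTneq dev1_gt0 => Pr0.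
    by rewrite /gain sum_Pr_eq0 ?mulr0 ?ltxx.
  have [sg sg_valid gain_sg] := gain_pivot_profile obs i.
  have := dev_ge0 _ sg_valid; rewrite gain_sg Vd_sum_uninformed.
  by rewrite leNgt nmulr_rlt0 ?subr_lt0 // mulr_gt0 ?Vd_sum_prior_gt0.
Qed.

Lemma private_equilibrium_exists : exists sg, equilibrium v1 v2 P obs sg.
Proof.
have [p gain_p] := gain_poly obs (fun _ => news_poly) i0 ord0.
have [x x01 [best_x corner]] := poly_unit_equilibrium p.
exists (fun _ => news_vote x); split; first split.
- by move=> j; apply: news_vote_valid.
- move=> i f f_valid; rewrite -subr_le0 -[X in _ - X]EU_upd_id.
  apply: le_trans (news_vote_deviation i x (fun _ => news_vote_valid x01) f_valid) _.
  by rewrite (gain_private_sym _ i i0) gain_p best_x.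
- by move=> i; apply: news_vote_undominated => // x_lt1; rewrite gain_p corner.
Qed.

End PrivateSignals.

Section PublicInformation.
Local Notation obs := (@obs_public n K A1 A2).

Definition public_vote i s : R := (0 < Vd_sum i (ev_S s))%R%:R.

Lemma public_vote_dominant i sg f : valid_profile sg -> valid f ->
  EU obs i (upd sg i f) <= EU obs i (upd sg i (public_vote i)).
Proof.
move=> sg_valid f_valid; apply: EU_upd_le => s; have /andP[fs_ge0 fs_le1] := f_valid s.
rewrite gain_public mulrCA mulr_ge0_le0 //.
  by apply: pivotal_ge0 => j; apply: sg_valid.
rewrite /public_vote; case: (ltrP 0 (Vd_sum i (ev_S s))) => V_s; rewrite /= ?subr0.
  by rewrite mulr_le0_ge0 ?subr_le0 // ltW.
by rewrite mulr_ge0_le0.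
Qed.

Lemma public_vote_equilibrium : equilibrium v1 v2 P obs public_vote.
Proof.
apply: equilibrium_of_dominant => [i s | i sg f]; last exact: public_vote_dominant.
by rewrite /public_vote; case: (_ < _); rewrite ?lexx ?ler01.
Qed.

Hypothesis VdE_neq0 : A_nonzero v1 v2 P.

Lemma Vd_sum_neq0 i E : 0 < Pr P E -> Vd_sum i E != 0.
Proof.
move=> PE_gt0; have := VdE_neq0 i PE_gt0.
by rewrite !neq_lt (VdE_sign _ _).1 (VdE_sign _ _).2.
Qed.

Lemma undominated_public_vote i f : valid f -> ~ weakly_dominated v1 v2 P obs i f ->
  forall s, 0 < Pr P (ev_S s) -> f s = public_vote i s.
Proof.
move=> f_valid undominated s Ps; apply/eqP; apply: contraT => f_neq.
have /andP[fs_ge0 fs_le1] := f_valid s.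
have loss : (f s - public_vote i s) * Vd_sum i (ev_S s) < 0.
  move: f_neq; rewrite /public_vote; have := Vd_sum_neq0 i Ps.
  case: ltrgtP => //= V_s _ f_neq.
    by rewrite nmulr_rlt0 // subr_lt0 lt_def eq_sym f_neq.
  by rewrite pmulr_rlt0 // subr_gt0 lt_def f_neq.
pose f' t := if t == s then public_vote i s else f t.
have f's : f' s = public_vote i s by rewrite /f' eqxx.
have dev sg : EU obs i (upd sg i f) - EU obs i (upd sg i f') <=
               (f s - public_vote i s) * gain obs sg i s.
  rewrite -f's; apply: EU_upd_sub_le => t /negbTE ts.
  by rewrite /f' ts subrr mul0r.
exfalso; apply: undominated; exists f'; split; last split.
- move=> t; rewrite /f'; case: eqP => _ //.
  by rewrite /public_vote; case: (_ < _); rewrite ?lexx ?ler01.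
- move=> sg sg_valid; rewrite -subr_le0; apply: le_trans (dev sg) _.
  rewrite gain_public mulrCA mulr_ge0_le0 ?(ltW loss) //.
  by apply: pivotal_ge0 => j; apply: sg_valid.
- have [sg sg_valid gain_sg] := gain_pivot_profile obs i.
  exists sg; split => //; rewrite -subr_lt0.
  by apply: le_lt_trans (dev sg) _; rewrite gain_sg.
Qed.

End PublicInformation.

End Model.

Theorem proposition1 (R : realType) (n K : nat) (A1 A2 : finType)
    (v1 : A1 -> R) (v2 : A2 -> R) (P : {ffun Omega n K A1 A2 -> R}) :
  odd n -> (3 <= n)%N ->
  injective v1 -> injective v2 ->
  is_prob P ->
  A_prior_favors v1 v2 P ->
  A_symmetric P ->
  A_uninformed P ->
  A_own_signal_decisive v1 v2 P ->
  A_nonzero v1 v2 P ->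
  A_news v1 v2 P ->
  (exists sg, equilibrium v1 v2 P (@obs_private n K A1 A2) sg) /\
  (exists phi, equilibrium v1 v2 P (@obs_public n K A1 A2) phi /\
     forall phi', equilibrium v1 v2 P (@obs_public n K A1 A2) phi' ->
       forall (i : 'I_n) (s : {ffun 'I_n -> 'I_K.+1}),
         0 < Pr P (ev_S s) -> phi' i s = phi i s).
Proof.
(* of [3 <= n] only [0 < n] is used *)
move=> _ n_ge3 _ _ [P_ge0 _] prior sym uninformed own nonzero _.
have i0 : 'I_n := Ordinal (leq_trans (isT : (0 < 3)%N) n_ge3).
split; first exact: (private_equilibrium_exists P_ge0 own sym uninformed prior i0).
exists (public_vote v1 v2 P); split; first exact: public_vote_equilibrium.
move=> phi [[phi_valid _] phi_undominated] i s Ps.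
exact: (undominated_public_vote P_ge0 nonzero (phi_valid i) (phi_undominated i)).
Qed.
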